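(* Let $H$ be a graph with an $\ell$-colouring $\phi_2$ such that every $\phi_2$-repetitive lazy walk in $H$ is boring. Then for every graph $G$, $\pi^*(G\boxtimes H)\le \ell\,\pi^*(G)$.
   Context: All graphs are finite and simple. A lazy walk in a graph $G$ is a sequence of vertices $v_1,\dots,v_m$ such that for each $i<m$, either $v_iv_{i+1}\in E(G)$ or $v_i=v_{i+1}$. For a colouring $\phi$ of $V(G)$, a lazy walk $v_1,\dots,v_{2t}$ is $\phi$-repetitive if $\phi(v_i)=\phi(v_{i+t})$ for each $i\in\{1,\dots,t\}$; it is boring if $v_i=v_{i+t}$ for every $i\in\{1,\dots,t\}$. A colouring $\phi$ is strongly nonrepetitive if for every $\phi$-repetitive lazy walk $v_1,\dots,v_{2t}$ there exists $i\in\{1,\dots,t\}$ with $v_i=v_{i+t}$. $\pi^*(G)$ denotes the minimum number of colours in a strongly nonrepetitive colouring of $G$. The strong product $A\boxtimes B$ has vertex set $V(A)\times V(B)$, with distinct $(v,x),(w,y)$ adjacent iff ($v=w$ and $xy\in E(B)$) or ($x=y$ and $vw\in E(A)$) or ($vw\in E(A)$ and $xy\in E(B)$). *)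

From HB Require Import structures.
From mathcomp Require Import all_boot.
From Stdlib Require Import ClassicalEpsilon.
Set Implicit Arguments. Unset Strict Implicit. Unset Printing Implicit Defensive.

Definition simple_graph (T : finType) (e : rel T) : Prop :=
  symmetric e /\ irreflexive e.

Definition lazy_walk (T : finType) (e : rel T) (w : nat -> T) (m : nat) : Prop :=
  forall i, i.+1 < m -> w i = w i.+1 \/ e (w i) (w i.+1).

Definition repetitive (T C : Type) (phi : T -> C) (w : nat -> T) (t : nat) : Prop :=
  forall i, i < t -> phi (w i) = phi (w (i + t)).

Definition boring (T : Type) (w : nat -> T) (t : nat) : Prop :=
  forall i, i < t -> w i = w (i + t).

(* Strongly nonrepetitive colouring (walks are nonempty, so t >= 1). *)
Definition strongly_nonrep (T : finType) (e : rel T) (C : Type) (phi : T -> C) : Prop :=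
  forall (t : nat) (w : nat -> T), 0 < t -> lazy_walk e w (2 * t) ->
    repetitive phi w t -> exists2 i, i < t & w i = w (i + t).

Definition snr_colourable (T : finType) (e : rel T) (k : nat) : Prop :=
  exists phi : T -> 'I_k, strongly_nonrep e phi.

Definition pbool (P : Prop) : bool :=
  if excluded_middle_informative P then true else false.

Lemma pboolP (P : Prop) : reflect P (pbool P).
Proof. rewrite /pbool; case: excluded_middle_informative => h; constructor => //. Qed.

Lemma snr_colourable_card (T : finType) (e : rel T) : snr_colourable e #|T|.
Proof.
exists (@enum_rank T) => t w t0 _ rep; exists 0 => //.
by apply: enum_rank_inj; apply: rep.
Qed.

Lemma ex_snr (T : finType) (e : rel T) : exists k, pbool (snr_colourable e k).
Proof. by exists #|T|; apply/pboolP; apply: snr_colourable_card. Qed.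

Definition pi_star (T : finType) (e : rel T) : nat := ex_minn (ex_snr e).

Definition strong_prod (A B : finType) (eA : rel A) (eB : rel B) : rel (A * B)%type :=
  fun p q =>
    (p != q) &&
    [|| (p.1 == q.1) && eB p.2 q.2,
        (p.2 == q.2) && eA p.1 q.1
      | eA p.1 q.1 && eB p.2 q.2].

From mathcomp Require Import all_boot.

Set Implicit Arguments. Unset Strict Implicit.

(* Let phi1 be an optimal strongly nonrepetitive colouring of G and phi2 the
   given l-colouring of H whose repetitive lazy walks are all boring.  Colour
   (v, x) by the pair (phi1 v, phi2 x).  A lazy walk in G ⊠ H projects to a
   lazy walk in each factor (every product edge moves each coordinate by an
   edge or not at all), and a walk repetitive for the pair colouring has
   repetitive projections.  The H-projection is therefore boring, and the
   G-projection has an index i with equal first coordinates at i and i + t;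
   at that index the two product vertices coincide.  Hence the pair colouring
   is strongly nonrepetitive with k * l colours, k = pi^*(G).

   The argument never uses
   that the graphs are simple. *)

Section PiStar.
Variables (T : finType) (e : rel T).

Lemma pi_star_colourable : snr_colourable e (pi_star e).
Proof. by rewrite /pi_star; case: ex_minnP => k /pboolP. Qed.

Lemma pi_star_min k : snr_colourable e k -> pi_star e <= k.
Proof. by rewrite /pi_star; case: ex_minnP => m _ Hmin /pboolP /Hmin. Qed.

Lemma strongly_nonrep_inj (C D : Type) (phi : T -> C) (f : C -> D) :
  injective f -> strongly_nonrep e phi -> strongly_nonrep e (f \o phi).
Proof.
move=> f_inj snr t w t_gt0 walk rep; apply: snr => // i it.
exact/f_inj/rep.
Qed.

Lemma snr_colourable_palette (C : finType) (phi : T -> C) :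
  strongly_nonrep e phi -> snr_colourable e #|C|.
Proof.
move=> snr; exists (enum_rank \o phi).
exact: strongly_nonrep_inj (@enum_rank_inj C) snr.
Qed.

End PiStar.

Section StrongProduct.
Variables (A B : finType) (eA : rel A) (eB : rel B).

Lemma strong_prod_walk_fst (w : nat -> A * B) (m : nat) :
  lazy_walk (strong_prod eA eB) w m -> lazy_walk eA (fun i => (w i).1) m.
Proof.
move=> walk i im; case: (walk i im) => [->|]; first by left.
by case/andP=> _ /or3P [/andP [/eqP -> _]|/andP [_ ->]|/andP [-> _]];
  [left|right|right].
Qed.

Lemma strong_prod_walk_snd (w : nat -> A * B) (m : nat) :
  lazy_walk (strong_prod eA eB) w m -> lazy_walk eB (fun i => (w i).2) m.
Proof.
move=> walk i im; case: (walk i im) => [->|]; first by left.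
by case/andP=> _ /or3P [/andP [_ ->]|/andP [/eqP -> _]|/andP [_ ->]];
  [right|left|right].
Qed.

Lemma strongly_nonrep_pair (CA CB : Type) (phiA : A -> CA) (phiB : B -> CB) :
  strongly_nonrep eA phiA ->
  (forall t w, lazy_walk eB w (2 * t) -> repetitive phiB w t -> boring w t) ->
  strongly_nonrep (strong_prod eA eB) (fun p => (phiA p.1, phiB p.2)).
Proof.
move=> snrA boringB t w t_gt0 walk rep.
have boring2 : boring (fun i => (w i).2) t.
  by apply: (boringB t _ (strong_prod_walk_snd walk)) => i /rep [].
have [i it eq1] : exists2 i, i < t & (w i).1 = (w (i + t)).1.
  apply: (snrA t (fun i => (w i).1) t_gt0 (strong_prod_walk_fst walk)).
  by move=> i /rep [].
by exists i => //; apply: injective_projections => //; apply: boring2.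
Qed.

End StrongProduct.

Theorem mainTheorem6 (TH : finType) (eH : rel TH) (l : nat) (phi2 : TH -> 'I_l)
  (hH : simple_graph eH)
  (hphi2 : forall (t : nat) (w : nat -> TH),
      lazy_walk eH w (2 * t) -> repetitive phi2 w t -> boring w t)
  (TG : finType) (eG : rel TG) (hG : simple_graph eG) :
  pi_star (strong_prod eG eH) <= l * pi_star eG.
Proof.
have [phi1 snr1] := pi_star_colourable eG.
have snr_pair := strongly_nonrep_pair snr1 hphi2.
have -> : l * pi_star eG = #|{: 'I_(pi_star eG) * 'I_l}|.
  by rewrite card_prod !card_ord mulnC.
exact/pi_star_min/(snr_colourable_palette snr_pair).
Qed.
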